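(* Let $\mathcal{B}=(T,\bowtie)$ be a homogeneous block, let $(T_1,\dots,T_k)$ be a legal partition of $T$ (a partition into $k$ conflict-free sets), and let $\sigma$ be a permutation of $\{1,\dots,k\}$. Let $\mathcal S=\mathrm{LevelSchedule}(T_1,\dots,T_k)$ and $\mathcal S_\sigma=\mathrm{LevelSchedule}(T_{\sigma(1)},\dots,T_{\sigma(k)})$. Then $\mathrm{Lt}_{\mathbb 1}(\mathcal S)\le k$ and $\mathrm{Lt}_{\mathbb 1}(\mathcal S_\sigma)\le k$.
   Context: A block consists of a finite set $T$ of transactions with a symmetric irreflexive conflict relation $\bowtie$; homogeneous means all transactions have the same length, taken to be $1$. A set is conflict-free if no two elements conflict; a legal partition is an ordered sequence of pairwise disjoint conflict-free sets with union $T$. A schedule is $\mathcal S\subseteq T\times T$ with $(T,\mathcal S)$ acyclic; $\mathrm{Lt}_{\mathbb 1}(\mathcal S)$ is the maximum number of vertices on a directed path in $(T,\mathcal S)$. $\mathrm{LevelSchedule}(B_1,\dots,B_k)$: set $B_0=\emptyset$, $\mathcal S=\emptyset$; for $i=1,\dots,k$ and, for each $i$, for $j=i-1,\dots,0$ (decreasing): let $E=\{(u,v)\in B_j\times B_i: u\bowtie v\}$, let $P$ be the set of pairs $(x,y)$ with a directed path from $x$ to $y$ in the current $(T,\mathcal S)$, and set $\mathcal S\leftarrow\mathcal S\cup(E\setminus P)$; output $\mathcal S$. *)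

From mathcomp Require Import all_boot all_fingroup.
Set Implicit Arguments. Unset Strict Implicit. Unset Printing Implicit Defensive.

Section Block.
Variable T : finType.
Variable conf : rel T.

Definition sched_edge (S : {set T * T}) : rel T := fun x y => (x, y) \in S.

Definition reach (S : {set T * T}) (x y : T) : bool :=
  [exists z, sched_edge S x z && connect (sched_edge S) z y].

Definition conflict_free (A : {set T}) : bool :=
  [forall x in A, forall y in A, ~~ conf x y].

Definition legal_partition (k : nat) (P : 'I_k -> {set T}) : Prop :=
  (forall i, conflict_free (P i)) /\
  (forall i j, i != j -> [disjoint P i & P j]) /\
  (\bigcup_(i < k) P i = [set: T]).

Definition level_step (B : nat -> {set T}) (i : nat) (S : {set T * T}) (j : nat)
  : {set T * T} :=
  S :|: [set p | [&& p.1 \in B j, p.2 \in B i, conf p.1 p.2 & ~~ reach S p.1 p.2]].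

(* LevelSchedule(B_1,...,B_k), blocks given as a sequence [B_1; ...; B_k]; B_0 = ∅ *)
Definition LevelSchedule (Bs : seq {set T}) : {set T * T} :=
  let B := fun j => if j is j'.+1 then nth set0 Bs j' else set0 in
  foldl (fun S i => foldl (level_step B i) S (rev (iota 0 i)))
        set0 (iota 1 (size Bs)).

Definition is_dpath (S : {set T * T}) (s : seq T) : bool :=
  if s is x :: p then uniq s && path (sched_edge S) x p else false.

(* Lt_1(S): maximum number of vertices on a directed path (unit lengths) *)
Definition Lt1 (S : {set T * T}) : nat :=
  \max_(n < #|T|.+1 | [exists t : n.-tuple T, is_dpath S t]) n.

End Block.

From mathcomp Require Import all_boot all_fingroup.
Set Implicit Arguments. Unset Strict Implicit. Unset Printing Implicit Defensive.

(* Every edge added by LevelSchedule goes from an earlier block to a strictly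
   later one.  When the blocks partition T, the index of the block containing a
   vertex therefore strictly increases along every directed path, so a path
   meets each of the k blocks at most once and has at most k vertices. *)

Lemma foldl_invariant (R : Type) (A : eqType) (P : R -> Prop) (f : R -> A -> R)
    (z : R) (s : seq A) :
  (forall r x, x \in s -> P r -> P (f r x)) -> P z -> P (foldl f z s).
Proof.
elim: s z => [|x s IHs] z //= fP Pz.
apply: IHs; first by move=> r y ys; apply: fP; rewrite inE ys orbT.
by apply: fP; rewrite ?inE ?eqxx.
Qed.

Section RankBound.
Variables (T : finType) (S : {set T * T}) (f : T -> nat) (n : nat).
Hypothesis f_edge : forall x y, sched_edge S x y -> f x < f y.
Hypothesis f_lt : forall x, f x < n.

Lemma dpath_size_le_rank (s : seq T) : is_dpath S s -> size s <= n.
Proof.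
case: s => [|x p] //= /andP[_ xp].
have sorted_f : sorted ltn (map f (x :: p)).
  by rewrite /= path_map; apply: sub_path xp => u v /f_edge.
have uniq_f : uniq (map f (x :: p)) := sorted_uniq ltn_trans ltnn sorted_f.
rewrite -(size_map f) -[n](size_iota 0); apply: uniq_leq_size uniq_f _.
by move=> _ /mapP[y _ ->]; rewrite mem_iota f_lt.
Qed.

Lemma Lt1_le_rank : Lt1 S <= n.
Proof.
apply/bigmax_leqP => m /existsP[t /dpath_size_le_rank].
by rewrite size_tuple.
Qed.

End RankBound.

Section LevelScheduleRank.
Variables (T : finType) (conf : rel T) (Bs : seq {set T}) (f : T -> nat).
Hypothesis f_nth : forall j x, x \in nth set0 Bs j -> f x = j.

Definition rank_increasing (S : {set T * T}) : Prop :=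
  forall x y, sched_edge S x y -> f x < f y.

(* Block [j] of the algorithm is [nth set0 Bs j.-1], and block [0] is empty. *)
Lemma level_step_rank_increasing (S : {set T * T}) (i j : nat) :
  j < i -> rank_increasing S ->
  rank_increasing
    (level_step conf (fun j => if j is j'.+1 then nth set0 Bs j' else set0) i S j).
Proof.
move=> ji incS x y; rewrite /sched_edge /level_step !inE /= => /orP[/incS // |].
case/and4P; case: j ji => [|j] ji; first by rewrite inE.
case: i ji => // i ji /f_nth -> /f_nth -> _ _.
exact: ji.
Qed.

Lemma LevelSchedule_rank_increasing : rank_increasing (LevelSchedule conf Bs).
Proof.
apply: (@foldl_invariant _ _ rank_increasing); last first.
  by move=> x y; rewrite /sched_edge inE.
move=> S i _ incS; apply: (@foldl_invariant _ _ rank_increasing) => // S' j.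
rewrite mem_rev mem_iota add0n => /andP[_ ji].
exact: level_step_rank_increasing.
Qed.

End LevelScheduleRank.

Section SeqPartition.
Variables (T : finType) (Bs : seq {set T}).
Hypothesis Bs_disjoint : forall i j x, i < size Bs -> j < size Bs ->
  x \in nth set0 Bs i -> x \in nth set0 Bs j -> i = j.
Hypothesis Bs_cover : forall x, exists2 i, i < size Bs & x \in nth set0 Bs i.

Definition block_index (x : T) : nat := find (fun A : {set T} => x \in A) Bs.

Lemma has_block (x : T) : has (fun A : {set T} => x \in A) Bs.
Proof. by have [i ? ?] := Bs_cover x; apply/(has_nthP set0); exists i. Qed.

Lemma block_index_lt (x : T) : block_index x < size Bs.
Proof. by rewrite -has_find has_block. Qed.

Lemma block_index_nth (j : nat) (x : T) :
  x \in nth set0 Bs j -> block_index x = j.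
Proof.
move=> xj; have jBs : j < size Bs.
  by case: ltnP xj => // ?; rewrite nth_default ?inE.
apply: Bs_disjoint xj => //; first exact: block_index_lt.
exact: nth_find (has_block x).
Qed.

Lemma Lt1_LevelSchedule_partition (conf : rel T) :
  Lt1 (LevelSchedule conf Bs) <= size Bs.
Proof.
apply: (Lt1_le_rank (f := block_index)); last exact: block_index_lt.
exact: LevelSchedule_rank_increasing block_index_nth.
Qed.

End SeqPartition.

Lemma Lt1_LevelSchedule_perm (T : finType) (conf : rel T) (k : nat)
    (P : 'I_k -> {set T}) (s : 'S_k) :
  legal_partition conf P ->
  Lt1 (LevelSchedule conf [seq P (s i) | i <- enum 'I_k]) <= k.
Proof.
case=> _ [P_disjoint P_cover].
set Bs := [seq _ | i <- _].
have size_Bs : size Bs = k by rewrite size_map size_enum_ord.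
have nth_Bs i (ik : i < k) : nth set0 Bs i = P (s (Ordinal ik)).
  rewrite (nth_map (Ordinal ik)) ?size_enum_ord //.
  by rewrite -[i]/(nat_of_ord (Ordinal ik)) nth_ord_enum.
rewrite -[X in _ <= X]size_Bs; apply: Lt1_LevelSchedule_partition.
- move=> i j x; rewrite size_Bs => ik jk; rewrite !nth_Bs => xi xj.
  have [/perm_inj [] // | neq] := eqVneq (s (Ordinal ik)) (s (Ordinal jk)).
  by have /disjointFr/(_ xi) := P_disjoint _ _ neq; rewrite xj.
- move=> x; have : x \in \bigcup_(i < k) P i by rewrite P_cover inE.
  case/bigcupP => i _ xi; exists (s^-1 i)%g; first by rewrite size_Bs.
  have s_inv : Ordinal (ltn_ord (s^-1 i)%g) = (s^-1 i)%g by apply: val_inj.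
  by rewrite nth_Bs s_inv permKV.
Qed.

Theorem claim1 (T : finType) (conf : rel T)
  (conf_sym : symmetric conf) (conf_irr : irreflexive conf)
  (k : nat) (P : 'I_k -> {set T}) (sigma : 'S_k) :
  legal_partition conf P ->
  (Lt1 (LevelSchedule conf [seq P i | i <- enum 'I_k]) <= k)%N /\
  (Lt1 (LevelSchedule conf [seq P (sigma i) | i <- enum 'I_k]) <= k)%N.
Proof.
move=> legalP; split; last exact: Lt1_LevelSchedule_perm.
have -> : [seq P i | i <- enum 'I_k] = [seq P ((1 : 'S_k)%g i) | i <- enum 'I_k].
  by apply: eq_map => i; rewrite perm1.
exact: Lt1_LevelSchedule_perm.
Qed.
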